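(* Let $H$ be a complex Hilbert space, $\varphi,\psi:[0,1]\to\mathbb{R}$ continuous, and $A\in\mathbb{B}(H)$. Then: (1) if $\varphi\ne-\psi$ (i.e. $\varphi+\psi$ is not identically zero), then $\displaystyle\|\operatorname{Re}A\|\le\Big(\int_0^1|\varphi(t)+\psi(t)|\,dt\Big)^{-1}\int_0^1\omega_t(\varphi,\psi;A)\,dt$; (2) if $\varphi\ne\psi$, then $\displaystyle\|\operatorname{Im}A\|\le\Big(\int_0^1|\varphi(t)-\psi(t)|\,dt\Big)^{-1}\int_0^1\omega_t(\varphi,\psi;A)\,dt$; (3) if $|\varphi|\ne|\psi|$, then $\displaystyle\|A\|\le\Big[\Big(\int_0^1|\varphi(t)+\psi(t)|\,dt\Big)^{-1}+\Big(\int_0^1|\varphi(t)-\psi(t)|\,dt\Big)^{-1}\Big]\int_0^1\omega_t(\varphi,\psi;A)\,dt$.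
   Context: $\operatorname{Re}A=(A+A^* )/2$, $\operatorname{Im}A=(A-A^* )/(2i)$. $S_1(H)$ is the unit sphere of $H$ and $\omega_t(\varphi,\psi;A)=\sup_{x\in S_1(H)}|\langle(\varphi(t)A+\psi(t)A^* )x,x\rangle|$ for $t\in[0,1]$. *)

From HB Require Import structures.
From mathcomp Require Import all_boot all_order all_algebra.
From mathcomp Require Import all_classical all_reals all_analysis.
From mathcomp Require Import complex.
Set Implicit Arguments. Unset Strict Implicit. Unset Printing Implicit Defensive.
Import Order.TTheory GRing.Theory Num.Theory.
Import numFieldNormedType.Exports.
Local Open Scope ring_scope.
Local Open Scope classical_set_scope.

Section Hilbert.
Variables (R : realType) (H : lmodType R[i]) (ip : H -> H -> R[i]).

Definition hnorm (x : H) : R := Num.sqrt (complex.Re (ip x x)).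

Definition is_hilbert : Prop :=
  [/\ (forall (a : R[i]) (x y z : H), ip (a *: x + y) z = a * ip x z + ip y z),
      (forall x y : H, ip y x = conjc (ip x y)),
      (forall x : H, complex.Re (ip x x) >= 0 /\ complex.Im (ip x x) = 0),
      (forall x : H, ip x x = 0 -> x = 0) &
      (forall u : nat -> H,
          (forall e : R, 0 < e -> exists N : nat, forall m n : nat,
               (N <= m)%N -> (N <= n)%N -> hnorm (u m - u n) < e) ->
          exists l : H, forall e : R, 0 < e -> exists N : nat,
               forall n : nat, (N <= n)%N -> hnorm (u n - l) < e)].

Definition is_bounded_op (A : H -> H) : Prop :=
  (forall (a : R[i]) (x y : H), A (a *: x + y) = a *: A x + A y) /\
  exists M : R, forall x : H, hnorm (A x) <= M * hnorm x.

Definition is_adjoint (A Astar : H -> H) : Prop :=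
  forall x y : H, ip (A x) y = ip x (Astar y).

Definition unit_sphere : set H := [set x | hnorm x = 1].

Definition opnorm (T : H -> H) : R := sup [set hnorm (T x) | x in unit_sphere].

Definition ReOp (A Astar : H -> H) : H -> H :=
  fun x => (2%:R : R[i])^-1 *: (A x + Astar x).
Definition ImOp (A Astar : H -> H) : H -> H :=
  fun x => ((2%:R : R[i]) * 'i%C)^-1 *: (A x - Astar x).

Definition cmod (z : R[i]) : R := Num.sqrt (complex.Re z ^+ 2 + complex.Im z ^+ 2).

Definition omega_t (phi psi : R -> R) (A Astar : H -> H) (t : R) : R :=
  sup [set cmod (ip (((phi t)%:C)%C *: A x + ((psi t)%:C)%C *: Astar x) x)
      | x in unit_sphere].

End Hilbert.

Definition int01 (R : realType) (f : R -> R) : R :=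
  Rintegral (@lebesgue_measure R) `[(0:R), 1] f.

From HB Require Import structures.
From mathcomp Require Import all_boot all_order all_algebra.
From mathcomp Require Import all_classical all_reals all_analysis.
From mathcomp Require Import complex.
From mathcomp Require Import ring lra.
Import Order.TTheory GRing.Theory Num.Theory.
Import numFieldNormedType.Exports.
Local Open Scope ring_scope.
Local Open Scope classical_set_scope.
Local Open Scope complex_scope.
Set Implicit Arguments. Unset Strict Implicit.

(* For a unit vector x, <(phi(t) A + psi(t) A^* )x, x> has real part
   (phi + psi)(t) Re<Ax, x> and imaginary part (phi - psi)(t) Im<Ax, x>, so
   omega_t dominates |phi(t) + psi(t)| |Re<Ax, x>| and |phi(t) - psi(t)| |Im<Ax, x>|.
   Integrating over [0, 1] bounds the numerical radii of Re A and Im A; these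
   are self-adjoint, so polarization and the parallelogram law turn the bounds
   into bounds on Re<(Re A)x, y> and Re<(Im A)x, y> for unit x, y, hence on
   the norms, and A = Re A + i Im A gives the third estimate.  The integrals
   make sense because omega_t is a Lipschitz function of
   ((phi + psi)(t), (phi - psi)(t)), hence continuous. *)

Section ComplexModulus.
Variable R : realType.

Lemma le_cmodD (z w : R[i]) : cmod (z + w) <= cmod z + cmod w.
Proof. by have := ler_normD z w; rewrite !normc_def -rmorphD lecR. Qed.

Lemma cmod_ge_Re (z : R[i]) : `|complex.Re z| <= cmod z.
Proof. by rewrite -sqrtr_sqr ler_sqrt ?addr_ge0 ?sqr_ge0 // lerDl sqr_ge0. Qed.

Lemma cmod_ge_Im (z : R[i]) : `|complex.Im z| <= cmod z.
Proof. by rewrite -sqrtr_sqr ler_sqrt ?addr_ge0 ?sqr_ge0 // lerDr sqr_ge0. Qed.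

Lemma cmod_le_Re_Im (z : R[i]) : cmod z <= `|complex.Re z| + `|complex.Im z|.
Proof.
rewrite -[X in _ <= X]ger0_norm ?addr_ge0 // -sqrtr_sqr ler_sqrt ?sqr_ge0 //.
rewrite sqrrD !real_normK ?num_real // -addrA lerD2l lerDr.
by rewrite mulrn_wge0 // mulr_ge0.
Qed.

End ComplexModulus.

Section ModulusSup.
Variables (R : realType) (T : Type) (U : set T) (f g : T -> R) (C : R).
Hypothesis C_ge0 : 0 <= C.
Hypothesis fg_bounded : forall x, U x -> `|f x| <= C /\ `|g x| <= C.

Definition cmod_sup (a b : R) : R :=
  sup [set cmod (Complex (a * f x) (b * g x)) | x in U].

Lemma cmod_sup_ubound a b :
  has_ubound [set cmod (Complex (a * f x) (b * g x)) | x in U].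
Proof.
exists ((`|a| + `|b|) * C) => _ [x Ux <-].
apply: le_trans (cmod_le_Re_Im _) _; rewrite /= !normrM mulrDl.
by have [fC gC] := fg_bounded Ux; apply: lerD; apply: ler_wpM2l.
Qed.

Lemma cmod_le_sup a b x : U x -> cmod (Complex (a * f x) (b * g x)) <= cmod_sup a b.
Proof. by move=> Ux; apply: (ub_le_sup (cmod_sup_ubound a b)); exists x. Qed.

Lemma cmod_sup_ge a b x : U x ->
  `|a * f x| <= cmod_sup a b /\ `|b * g x| <= cmod_sup a b.
Proof.
move=> /(cmod_le_sup a b) le_sup; set z := Complex _ _ in le_sup.
by split; apply: le_trans le_sup; [exact: (cmod_ge_Re z) | exact: (cmod_ge_Im z)].
Qed.

Lemma cmod_sup_ge0 a b : 0 <= cmod_sup a b.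
Proof.
have [U0|/eqP/set0P[x Ux]] := pselect (U = set0).
  by rewrite /cmod_sup U0 image_set0 sup0.
by have [+ _] := cmod_sup_ge a b Ux; apply: le_trans.
Qed.

Lemma cmod_sup_lipschitz a b a' b' :
  cmod_sup a b <= cmod_sup a' b' + (`|a - a'| + `|b - b'|) * C.
Proof.
have [U0|/eqP/set0P[x0 Ux0]] := pselect (U = set0).
  by rewrite /cmod_sup U0 !image_set0 sup0 add0r mulr_ge0 ?addr_ge0.
apply: ge_sup; first by exists (cmod (Complex (a * f x0) (b * g x0))), x0.
move=> _ [x Ux <-].
have -> : Complex (a * f x) (b * g x) =
    Complex (a' * f x) (b' * g x) + Complex ((a - a') * f x) ((b - b') * g x).
  by apply/eqP; rewrite eq_complex /=; apply/andP; split; apply/eqP; ring.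
apply: le_trans (le_cmodD _ _) _; apply: lerD.
  exact: cmod_le_sup.
apply: le_trans (cmod_le_Re_Im _) _; rewrite /= !normrM mulrDl.
by have [fC gC] := fg_bounded Ux; apply: lerD; apply: ler_wpM2l.
Qed.

End ModulusSup.

Lemma lipschitz2_continuous_within (R : realType) (A : set R) (F : R -> R -> R)
    (C : R) (g1 g2 : R -> R) :
  0 <= C -> (forall a b a' b', F a b <= F a' b' + (`|a - a'| + `|b - b'|) * C) ->
  {within A, continuous g1} -> {within A, continuous g2} ->
  {within A, continuous (fun t => F (g1 t) (g2 t))}.
Proof.
move=> C0 FL c1 c2 s; apply/cvgrPdist_lt => e e0.
set d := e / (2 * (C + 1)).
have C1 : 0 < C + 1 by lra.
have d0 : 0 < d by rewrite divr_gt0 // mulr_gt0.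
have dC : 2 * d * C < e.
  have ed : 2 * d * (C + 1) = e by rewrite /d; field; rewrite gt_eqF.
  by nra.
have /cvgrPdist_lt/(_ d d0) near1 := c1 s.
have /cvgrPdist_lt/(_ d d0) near2 := c2 s.
near=> t.
have h1 : `|g1 s - g1 t| < d by near: t.
have h2 : `|g2 s - g2 t| < d by near: t.
have := FL (g1 s) (g2 s) (g1 t) (g2 t); have := FL (g1 t) (g2 t) (g1 s) (g2 s).
rewrite (distrC (g1 t)) (distrC (g2 t)) => le1 le2.
have L : (`|g1 s - g1 t| + `|g2 s - g2 t|) * C <= 2 * d * C.
  by rewrite ler_wpM2r //; lra.
rewrite /from_subspace /= ltr_norml; apply/andP; split; lra.
Unshelve. all: by end_near.
Qed.

Section IntervalIntegral.
Variable R : realType.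
Local Notation mu := (@lebesgue_measure R).

Lemma continuous_itv_integrable (f : R -> R) (a b : R) :
  {within `[a, b], continuous f} -> mu.-integrable `[a, b] (EFin \o f).
Proof. by move=> cf; apply: continuous_compact_integrable => //; exact: segment_compact. Qed.

Lemma Rintegral_itv_subset_le (f : R -> R) (a b u v : R) :
  {within `[a, b], continuous f} -> (forall t, `[a, b] t -> 0 <= f t) ->
  a <= u -> v <= b -> Rintegral mu `[u, v] f <= Rintegral mu `[a, b] f.
Proof.
move=> cf f0 au vb.
have uv_ab : `[u, v] `<=` `[a, b] by apply: subset_itv; rewrite bnd_simp.
rewrite -(setDUK uv_ab) Rintegral_setU //; last 3 first.
- exact: measurableD.
- by rewrite setDUK //; exact: continuous_itv_integrable.
- by rewrite disj_set2E setDIK.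
by rewrite lerDl; apply: Rintegral_ge0 => t [/f0].
Qed.

Lemma continuous_within_gt_subitv (f : R -> R) (a b t0 c : R) : a < b ->
  {within `[a, b], continuous f} -> t0 \in `[a, b] -> c < f t0 ->
  exists u v, [/\ a <= u, u < v, v <= b & forall t, u <= t <= v -> c < f t].
Proof.
move=> ab cf t0ab ct0.
have [e e0 near_t0] :
    exists2 e, 0 < e & forall t, `|t0 - t| < e -> `[a, b] t -> c < f t.
  have /(cvgr_gt (f t0))/(_ c ct0) near_c := cf t0.
  have abt0 : `[a, b] t0 by rewrite /= -inE.
  have : within `[a, b] (nbhs t0) (fun t => c < f t) by rewrite nbhs_subspace_in.
  by move=> /nbhs_ballP[e /= e0 ball_e]; exists e => // t dt abt.
move: t0ab; rewrite in_setE /= in_itv /= => /andP[at0 t0b].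
set d := Num.min (e / 2) ((b - a) / 2).
have de : d <= e / 2 by rewrite ge_min lexx.
have dab : d <= (b - a) / 2 by rewrite ge_min lexx orbT.
have d0 : 0 < d by rewrite lt_min; apply/andP; split; lra.
have near_in t : a <= t <= b -> `|t0 - t| <= d -> c < f t.
  move=> abt dt; apply: near_t0; first lra.
  by rewrite /= in_itv.
have [t0_le|t0_gt] := lerP t0 ((a + b) / 2).
- exists t0, (t0 + d); split; try lra.
  move=> t /andP[t0t tv]; apply: near_in; first by apply/andP; split; lra.
  by rewrite ler_norml; apply/andP; split; lra.
- exists (t0 - d), t0; split; try lra.
  move=> t /andP[ut tt0]; apply: near_in; first by apply/andP; split; lra.
  by rewrite ler_norml; apply/andP; split; lra.
Qed.

Lemma Rintegral_itv_gt0 (f : R -> R) (a b t0 : R) : a < b ->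
  {within `[a, b], continuous f} -> (forall t, `[a, b] t -> 0 <= f t) ->
  t0 \in `[a, b] -> 0 < f t0 -> 0 < Rintegral mu `[a, b] f.
Proof.
move=> ab cf f0 t0ab ft0.
have half_lt : f t0 / 2 < f t0 by lra.
have [u [v [au uv vb fuv]]] := continuous_within_gt_subitv ab cf t0ab half_lt.
have uv_ab : `[u, v] `<=` `[a, b] by apply: subset_itv; rewrite bnd_simp.
apply: (@lt_le_trans _ _ (Rintegral mu `[u, v] (fun=> f t0 / 2))).
  rewrite Rintegral_cst // mulr_gt0 ?divr_gt0 //.
  have := @lebesgue_measure_itv R `[u, v]%R; rewrite /= lte_fin uv -EFinD => mu_uv.
  have -> : mu `[u, v] = (v - u)%:E by apply: mu_uv.
  by rewrite /= subr_gt0.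
apply: le_trans (Rintegral_itv_subset_le cf f0 au vb).
apply: le_Rintegral => //.
- by apply: continuous_itv_integrable; apply: cst_continuous.
- exact: integrableS (continuous_itv_integrable cf).
- by move=> t; rewrite /= in_itv /= => /fuv/ltW.
Qed.

Lemma Rintegral_itv_norm_gt0 (g : R -> R) (a b : R) : a < b ->
  {within `[a, b], continuous g} -> (exists2 t, t \in `[a, b] & g t != 0) ->
  0 < Rintegral mu `[a, b] (fun t => `|g t|).
Proof.
move=> ab cg [t0 t0ab gt0]; apply: (Rintegral_itv_gt0 ab _ _ t0ab) => //.
- by move=> s; apply: cvg_norm; exact: cg s.
- by rewrite normr_gt0.
Qed.

Lemma le_Rintegral_itv_div (g h : R -> R) (a b c : R) :
  {within `[a, b], continuous g} -> {within `[a, b], continuous h} ->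
  0 < Rintegral mu `[a, b] g -> (forall t, `[a, b] t -> g t * c <= h t) ->
  c <= (Rintegral mu `[a, b] g)^-1 * Rintegral mu `[a, b] h.
Proof.
move=> cg ch g_gt0 gch.
rewrite mulrC ler_pdivlMr // mulrC -RintegralZr //; last exact: continuous_itv_integrable.
apply: le_Rintegral => //; last exact: continuous_itv_integrable.
by apply: continuous_itv_integrable => s; apply: cvgM; [exact: cg s | exact: cvg_cst].
Qed.

End IntervalIntegral.

Lemma ReOp_add_ImOp (R : realType) (H : lmodType R[i]) (A Astar : H -> H) (x : H) :
  A x = ReOp A Astar x + 'i *: ImOp A Astar x.
Proof.
have i_neq0 : 'i != 0 :> R[i] by apply/eqP; case=> /eqP; rewrite oner_eq0.
rewrite /ReOp /ImOp /= scalerA invfM mulrCA mulfV // mulr1 -scalerDr addrACA subrr addr0.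
by rewrite -mulr2n -(scaler_nat (V := H)) scalerA mulVf ?scale1r // pnatr_eq0.
Qed.

Section InnerProductSpace.
Variables (R : realType) (H : lmodType R[i]) (ip : H -> H -> R[i]).
Hypothesis ipL : forall (a : R[i]) (x y z : H), ip (a *: x + y) z = a * ip x z + ip y z.
Hypothesis ipC : forall x y : H, ip y x = conjc (ip x y).

Lemma ip0l z : ip 0 z = 0.
Proof.
have := ipL 1 0 0 z; rewrite scale1r addr0 mul1r => ip00.
by apply: (addrI (ip 0 z)); rewrite addr0 -ip00.
Qed.

Lemma ipZl a x z : ip (a *: x) z = a * ip x z.
Proof. by have := ipL a x 0 z; rewrite addr0 ip0l addr0. Qed.

Lemma ipDl x y z : ip (x + y) z = ip x z + ip y z.
Proof. by have := ipL 1 x y z; rewrite scale1r mul1r. Qed.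

Lemma ipNl x z : ip (- x) z = - ip x z.
Proof. by rewrite -scaleN1r ipZl mulN1r. Qed.

Lemma ipBl x y z : ip (x - y) z = ip x z - ip y z.
Proof. by rewrite ipDl ipNl. Qed.

Lemma ipZr a x z : ip z (a *: x) = conjc a * ip z x.
Proof. by rewrite !(ipC _ z) ipZl rmorphM. Qed.

Lemma ipDr x y z : ip z (x + y) = ip z x + ip z y.
Proof. by rewrite !(ipC _ z) ipDl rmorphD. Qed.

Lemma ipNr x z : ip z (- x) = - ip z x.
Proof. by rewrite !(ipC _ z) ipNl rmorphN. Qed.

Lemma ipBr x y z : ip z (x - y) = ip z x - ip z y.
Proof. by rewrite ipDr ipNr. Qed.

Definition normsq (x : H) : R := complex.Re (ip x x).

Lemma normsqD x y : normsq (x + y) = normsq x + normsq y + 2 * complex.Re (ip x y).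
Proof.
rewrite /normsq ipDl !ipDr (ipC x y).
by case: (ip x x) (ip x y) (ip y y) => [a b] [c d] [e f] /=; ring.
Qed.

Lemma normsqB x y : normsq (x - y) = normsq x + normsq y - 2 * complex.Re (ip x y).
Proof.
rewrite /normsq ipBl !ipBr (ipC x y).
by case: (ip x x) (ip x y) (ip y y) => [a b] [c d] [e f] /=; ring.
Qed.

Lemma normsq_parallelogram x y :
  normsq (x + y) + normsq (x - y) = 2 * normsq x + 2 * normsq y.
Proof. by rewrite normsqD normsqB; ring. Qed.

Lemma normsqZ c x :
  normsq (c *: x) = (complex.Re c ^+ 2 + complex.Im c ^+ 2) * normsq x.
Proof.
by rewrite /normsq ipZl ipZr; case: c => a b; case: (ip x x) => u v /=; ring.
Qed.

Lemma normsqN x : normsq (- x) = normsq x.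
Proof. by rewrite /normsq ipNl ipNr opprK. Qed.

Lemma normsq_mulNi x : normsq (- 'i *: x) = normsq x.
Proof. by rewrite normsqZ /= oppr0 expr0n /= add0r sqrrN expr1n mul1r. Qed.

Lemma Re_ip_mulNi v y : complex.Re (ip (- 'i *: v) y) = complex.Im (ip v y).
Proof. by rewrite ipZl; case: (ip v y) => a b /=; ring. Qed.

Lemma Re_ip_ReOp_ImOp (A Astar : H -> H) x y :
  complex.Re (ip (A x) y) =
  complex.Re (ip (ReOp A Astar x) y) + complex.Re (ip (ImOp A Astar x) (- 'i *: y)).
Proof.
rewrite {1}(ReOp_add_ImOp A Astar x) ipDl (ipZl 'i) (ipZr (- 'i)).
by case: (ip (ReOp A Astar x) y) (ip (ImOp A Astar x) y) => [a b] [c d] /=; ring.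
Qed.

Hypothesis ipP : forall x : H, complex.Re (ip x x) >= 0 /\ complex.Im (ip x x) = 0.
Hypothesis ipD : forall x : H, ip x x = 0 -> x = 0.

Lemma normsq_ge0 x : 0 <= normsq x.
Proof. by case: (ipP x). Qed.

Lemma normsq_eq0 x : normsq x = 0 -> x = 0.
Proof.
rewrite /normsq => Re0; apply: ipD; have [_] := ipP x.
by move: Re0; case: (ip x x) => a b /= -> ->.
Qed.

Lemma hnorm_eq1 x : hnorm ip x = 1 <-> normsq x = 1.
Proof.
split=> [N1|]; last by rewrite /hnorm -/(normsq x) => ->; rewrite sqrtr1.
by rewrite -(sqr_sqrtr (normsq_ge0 x)) [Num.sqrt _]N1 expr1n.
Qed.

Lemma normsq_normalize x :
  normsq x != 0 -> normsq ((Num.sqrt (normsq x))^-1%:C *: x) = 1.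
Proof.
move=> Nx; rewrite normsqZ /= expr0n /= addr0 exprVn sqr_sqrtr ?normsq_ge0 //.
exact: mulVf.
Qed.

Lemma Re_ip_le_mean u v : complex.Re (ip u v) <= (normsq u + normsq v) / 2.
Proof. by have := normsq_ge0 (u - v); rewrite normsqB; lra. Qed.

Lemma normr_Re_ip_le_mean u v : `|complex.Re (ip u v)| <= (normsq u + normsq v) / 2.
Proof.
rewrite ler_norml Re_ip_le_mean andbT.
have := Re_ip_le_mean (- u) v; rewrite ipNl normsqN.
by case: (ip u v) => a b /=; lra.
Qed.

Lemma homog2_le_normsq (Q : H -> R) K :
  (forall (r : R) z, Q (r%:C *: z) = r ^+ 2 * Q z) ->
  (forall x, normsq x = 1 -> `|Q x| <= K) -> forall z, `|Q z| <= K * normsq z.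
Proof.
move=> QZ QK z; have [/normsq_eq0 ->|Nz] := eqVneq (normsq z) 0.
  by have := QZ 0 0; rewrite scaler0 expr0n mul0r => ->; rewrite normr0 /normsq ip0l mulr0.
have := QK _ (normsq_normalize Nz); rewrite QZ normrM ger0_norm ?sqr_ge0 //.
rewrite exprVn sqr_sqrtr ?normsq_ge0 // => le_K.
by rewrite -ler_pdivrMr ?lt_def ?Nz ?normsq_ge0 // mulrC.
Qed.

Lemma hnorm_le_Re_ip v K : 0 <= K ->
  (forall y, normsq y = 1 -> complex.Re (ip v y) <= K) -> hnorm ip v <= K.
Proof.
rewrite /hnorm -/(normsq v) => K0 vK; have [-> |Nv] := eqVneq (normsq v) 0.
  by rewrite sqrtr0.
(* Test against the unit vector v / ||v||. *)
have := vK _ (normsq_normalize Nv); rewrite ipZr -/(normsq v).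
have -> : complex.Re (((Num.sqrt (normsq v))^-1%:C)^* * ip v v) =
    (Num.sqrt (normsq v))^-1 * normsq v.
  by rewrite /normsq; case: (ip v v) => a b /=; ring.
rewrite -{2}(sqr_sqrtr (normsq_ge0 v)) expr2 mulKf //.
by rewrite sqrtr_eq0 -ltNge lt_def Nv normsq_ge0.
Qed.

Lemma opnorm_le_Re_ip (T : H -> H) K : 0 <= K ->
  (forall x y, normsq x = 1 -> normsq y = 1 -> complex.Re (ip (T x) y) <= K) ->
  opnorm ip T <= K.
Proof.
move=> K0 TK; have [S0|/eqP/set0P[x0 Sx0]] := pselect (unit_sphere ip = set0).
  by rewrite /opnorm S0 image_set0 sup0.
apply: ge_sup; first by exists (hnorm ip (T x0)), x0.
move=> _ [x /hnorm_eq1 Nx <-]; apply: hnorm_le_Re_ip => // y; exact: TK.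
Qed.

Section LinearOperator.
Variable B : H -> H.
Hypothesis Blin : forall (a : R[i]) (x y : H), B (a *: x + y) = a *: B x + B y.

Lemma lin0 : B 0 = 0.
Proof.
have := Blin 1 0 0; rewrite scale1r addr0 scale1r => B00.
by apply: (addrI (B 0)); rewrite addr0 -B00.
Qed.

Lemma linZ a x : B (a *: x) = a *: B x.
Proof. by have := Blin a x 0; rewrite addr0 lin0 addr0. Qed.

Lemma linD x y : B (x + y) = B x + B y.
Proof. by have := Blin 1 x y; rewrite !scale1r. Qed.

Lemma linB x y : B (x - y) = B x - B y.
Proof. by rewrite -scaleN1r linD linZ scaleN1r. Qed.

Lemma Re_ip_polarization x y :
  complex.Re (ip (B (x + y)) (x + y)) - complex.Re (ip (B (x - y)) (x - y)) =
  2 * (complex.Re (ip (B x) y) + complex.Re (ip (B y) x)).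
Proof.
rewrite linD linB ipBl ipDl !ipBr !ipDr.
by case: (ip (B x) x) (ip (B x) y) (ip (B y) x) (ip (B y) y) => [a b] [c d] [e f] [g h] /=; ring.
Qed.

Lemma Re_ip_sym_le K :
  (forall x, normsq x = 1 -> `|complex.Re (ip (B x) x)| <= K) ->
  forall x y, normsq x = 1 -> normsq y = 1 ->
  complex.Re (ip (B x) y) + complex.Re (ip (B y) x) <= 2 * K.
Proof.
move=> BK x y Nx Ny.
have QZ (r : R) z : complex.Re (ip (B (r%:C *: z)) (r%:C *: z)) =
    r ^+ 2 * complex.Re (ip (B z) z).
  by rewrite linZ ipZl ipZr; case: (ip (B z) z) => a b /=; ring.
have := homog2_le_normsq QZ BK (x + y); have := homog2_le_normsq QZ BK (x - y).
have sumK : K * normsq (x + y) + K * normsq (x - y) = 4 * K.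
  by rewrite -mulrDr normsq_parallelogram Nx Ny; ring.
have := Re_ip_polarization x y.
rewrite !ler_norml => polar /andP[Bm _] /andP[_ Bp]; lra.
Qed.

End LinearOperator.

Section SelfAdjointParts.
Variables (A Astar : H -> H).
Hypothesis Alin : forall (a : R[i]) (x y : H), A (a *: x + y) = a *: A x + A y.
Hypothesis adj : is_adjoint ip A Astar.

Lemma ip_adjoint_conj x y : ip (Astar x) y = conjc (ip (A y) x).
Proof. by rewrite ipC adj. Qed.

Lemma Re_ip_ReOp x y : complex.Re (ip (ReOp A Astar x) y) =
  (complex.Re (ip (A x) y) + complex.Re (ip (A y) x)) / 2.
Proof.
have inv2 : (2%:R : R[i])^-1 = (2^-1 : R)%:C by rewrite fmorphV rmorph_nat.
rewrite /ReOp ipZl ipDl ip_adjoint_conj inv2.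
by case: (ip (A x) y) (ip (A y) x) => [a b] [c d] /=; field.
Qed.

Lemma Re_ip_ImOp x y : complex.Re (ip (ImOp A Astar x) y) =
  (complex.Im (ip (A x) y) + complex.Im (ip (A y) x)) / 2.
Proof.
have i_neq0 : 'i != 0 :> R[i] by apply/eqP; case=> /eqP; rewrite oner_eq0.
have invi : ('i : R[i])^-1 = - 'i.
  by apply: (mulfI i_neq0); rewrite mulfV // mulrN -expr2 sqr_i opprK.
have inv2 : (2%:R : R[i])^-1 = (2^-1 : R)%:C by rewrite fmorphV rmorph_nat.
rewrite /ImOp ipZl ipBl ip_adjoint_conj invfM inv2 invi.
by case: (ip (A x) y) (ip (A y) x) => [a b] [c d] /=; field.
Qed.

Lemma ip_omega_integrand (a b : R) x :
  ip (a%:C *: A x + b%:C *: Astar x) x =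
  Complex ((a + b) * complex.Re (ip (A x) x)) ((a - b) * complex.Im (ip (A x) x)).
Proof.
rewrite ipDl !ipZl ip_adjoint_conj.
by case: (ip (A x) x) => [u v] /=; congr Complex; ring.
Qed.

Lemma Re_ip_ReOp_le K :
  (forall x, normsq x = 1 -> `|complex.Re (ip (A x) x)| <= K) ->
  forall x y, normsq x = 1 -> normsq y = 1 -> complex.Re (ip (ReOp A Astar x) y) <= K.
Proof.
move=> AK x y Nx Ny; rewrite Re_ip_ReOp.
by have := Re_ip_sym_le Alin AK Nx Ny; lra.
Qed.

Lemma Re_ip_ImOp_le K :
  (forall x, normsq x = 1 -> `|complex.Im (ip (A x) x)| <= K) ->
  forall x y, normsq x = 1 -> normsq y = 1 -> complex.Re (ip (ImOp A Astar x) y) <= K.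
Proof.
(* Im <A x, y> = Re <(-i A) x, y>: apply the real-part estimate to -i A. *)
move=> AK x y Nx Ny; rewrite Re_ip_ImOp -!Re_ip_mulNi.
have NiA_lin a u v : - 'i *: A (a *: u + v) = a *: (- 'i *: A u) + - 'i *: A v.
  by rewrite Alin scalerDr !scalerA mulrC.
have NiAK u : normsq u = 1 -> `|complex.Re (ip (- 'i *: A u) u)| <= K.
  by move=> Nu; rewrite Re_ip_mulNi; exact: AK.
by have := Re_ip_sym_le NiA_lin NiAK Nx Ny; lra.
Qed.

End SelfAdjointParts.

Section NumericalRadiusEstimates.
Variables (A Astar : H -> H) (M : R) (phi psi : R -> R).
Hypothesis Alin : forall (a : R[i]) (x y : H), A (a *: x + y) = a *: A x + A y.
Hypothesis A_bounded : forall x, hnorm ip (A x) <= M * hnorm ip x.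
Hypothesis adj : is_adjoint ip A Astar.
Hypothesis phi_cont : {within `[(0:R), 1], continuous phi}.
Hypothesis psi_cont : {within `[(0:R), 1], continuous psi}.

Local Notation omega := (omega_t ip phi psi A Astar).

(* Any bound would do: it only serves as a Lipschitz constant for omega_t. *)
Lemma ip_diag_bounded x : unit_sphere ip x ->
  `|complex.Re (ip (A x) x)| <= (M ^+ 2 + 1) / 2 /\
  `|complex.Im (ip (A x) x)| <= (M ^+ 2 + 1) / 2.
Proof.
move=> Sx; have /hnorm_eq1 Nx := Sx.
have NAx : normsq (A x) <= M ^+ 2.
  have := A_bounded x; rewrite Sx mulr1 /hnorm -/(normsq (A x)) => AxM.
  have s0 := sqrtr_ge0 (normsq (A x)).
  rewrite -(sqr_sqrtr (normsq_ge0 (A x))); nra.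
split; last rewrite -Re_ip_mulNi.
  by apply: le_trans (normr_Re_ip_le_mean _ _) _; rewrite Nx; lra.
by apply: le_trans (normr_Re_ip_le_mean _ _) _; rewrite normsq_mulNi Nx; lra.
Qed.

Lemma omega_tE t : omega t =
  cmod_sup (unit_sphere ip) (fun x => complex.Re (ip (A x) x))
    (fun x => complex.Im (ip (A x) x)) (phi t + psi t) (phi t - psi t).
Proof.
by rewrite /omega_t /cmod_sup; congr sup; apply: eq_imagel => x _; rewrite ip_omega_integrand.
Qed.

Lemma omega_t_ge t x : normsq x = 1 ->
  `|phi t + psi t| * `|complex.Re (ip (A x) x)| <= omega t /\
  `|phi t - psi t| * `|complex.Im (ip (A x) x)| <= omega t.
Proof.
move=> /hnorm_eq1 Sx; rewrite omega_tE -!normrM.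
exact: cmod_sup_ge ip_diag_bounded _ _ _ Sx.
Qed.

Lemma int01_omega_ge0 : 0 <= int01 omega.
Proof.
apply: Rintegral_ge0 => t _; rewrite -/(omega t) omega_tE.
exact: cmod_sup_ge0 ip_diag_bounded _ _.
Qed.

Lemma omega_t_continuous : {within `[(0:R), 1], continuous omega}.
Proof.
have -> : omega = fun t => cmod_sup (unit_sphere ip) (fun x => complex.Re (ip (A x) x))
    (fun x => complex.Im (ip (A x) x)) (phi t + psi t) (phi t - psi t).
  by apply/funext => t; exact: omega_tE.
have C_ge0 : 0 <= (M ^+ 2 + 1) / 2 by rewrite divr_ge0 ?addr_ge0 ?sqr_ge0.
apply: (lipschitz2_continuous_within C_ge0).
- exact: cmod_sup_lipschitz C_ge0 ip_diag_bounded.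
- exact: within_continuousD.
- exact: within_continuousB.
Qed.

Lemma Re_ip_ReOp_le_int : 0 < int01 (fun t => `|phi t + psi t|) ->
  forall x y, normsq x = 1 -> normsq y = 1 ->
  complex.Re (ip (ReOp A Astar x) y) <=
  (int01 (fun t => `|phi t + psi t|))^-1 * int01 omega.
Proof.
move=> I_gt0; apply: Re_ip_ReOp_le => // x Nx.
apply: le_Rintegral_itv_div omega_t_continuous I_gt0 _ => [s|t _].
  by apply: cvg_norm; exact: within_continuousD s.
by have [] := omega_t_ge t Nx.
Qed.

Lemma Re_ip_ImOp_le_int : 0 < int01 (fun t => `|phi t - psi t|) ->
  forall x y, normsq x = 1 -> normsq y = 1 ->
  complex.Re (ip (ImOp A Astar x) y) <=
  (int01 (fun t => `|phi t - psi t|))^-1 * int01 omega.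
Proof.
move=> I_gt0; apply: Re_ip_ImOp_le => // x Nx.
apply: le_Rintegral_itv_div omega_t_continuous I_gt0 _ => [s|t _].
  by apply: cvg_norm; exact: within_continuousB s.
by have [] := omega_t_ge t Nx.
Qed.

End NumericalRadiusEstimates.

End InnerProductSpace.

Theorem proposition2p9 (R : realType) (H : lmodType R[i]) (ip : H -> H -> R[i])
  (phi psi : R -> R) (A Astar : H -> H) :
  is_hilbert ip ->
  {within `[(0:R), 1]%classic, continuous phi} ->
  {within `[(0:R), 1]%classic, continuous psi} ->
  is_bounded_op ip A ->
  is_adjoint ip A Astar ->
  [/\ (exists2 t, t \in `[(0:R), 1] & phi t + psi t != 0) ->
        opnorm ip (ReOp A Astar)
        <= (int01 (fun t => `|phi t + psi t|))^-1
           * int01 (omega_t ip phi psi A Astar),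
      (exists2 t, t \in `[(0:R), 1] & phi t != psi t) ->
        opnorm ip (ImOp A Astar)
        <= (int01 (fun t => `|phi t - psi t|))^-1
           * int01 (omega_t ip phi psi A Astar) &
      (exists2 t, t \in `[(0:R), 1] & `|phi t| != `|psi t|) ->
        opnorm ip A
        <= ((int01 (fun t => `|phi t + psi t|))^-1
            + (int01 (fun t => `|phi t - psi t|))^-1)
           * int01 (omega_t ip phi psi A Astar)].
Proof.
move=> [ipL ipC ipP ipD _] phi_cont psi_cont [Alin [M A_bounded]] adj.
have ReOp_le := Re_ip_ReOp_le_int ipL ipC ipP ipD Alin A_bounded adj phi_cont psi_cont.
have ImOp_le := Re_ip_ImOp_le_int ipL ipC ipP ipD Alin A_bounded adj phi_cont psi_cont.
have J_ge0 := int01_omega_ge0 ipL ipC ipP phi psi A_bounded adj.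
have bound_ge0 I : 0 < I -> 0 <= I^-1 * int01 (omega_t ip phi psi A Astar).
  by move=> I_gt0; rewrite mulr_ge0 // invr_ge0 ltW.
have plus_gt0 := Rintegral_itv_norm_gt0 ltr01 (within_continuousD phi_cont psi_cont).
have minus_gt0 := Rintegral_itv_norm_gt0 ltr01 (within_continuousB phi_cont psi_cont).
have opnorm_le := opnorm_le_Re_ip ipL ipC ipP.
split=> [/plus_gt0 I1 | [t t01 phi_psi] | [t t01 phi_psi]].
- exact: opnorm_le (bound_ge0 _ I1) (ReOp_le I1).
- have I2 : 0 < int01 (fun t => `|phi t - psi t|).
    by apply: minus_gt0; exists t; rewrite ?subr_eq0.
  exact: opnorm_le (bound_ge0 _ I2) (ImOp_le I2).
- have I1 : 0 < int01 (fun t => `|phi t + psi t|).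
    apply: plus_gt0; exists t => //; apply: contra phi_psi.
    by rewrite addr_eq0 => /eqP ->; rewrite normrN.
  have I2 : 0 < int01 (fun t => `|phi t - psi t|).
    apply: minus_gt0; exists t => //; apply: contra phi_psi.
    by rewrite subr_eq0 => /eqP ->.
  rewrite mulrDl; apply: opnorm_le => [|x y Nx Ny]; first by rewrite addr_ge0 ?bound_ge0.
  rewrite (Re_ip_ReOp_ImOp ipL ipC A Astar); apply: lerD; first exact: ReOp_le.
  by apply: ImOp_le; rewrite ?normsq_mulNi.
Qed.
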